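(* Let $G$ be an $r$-regular graph with $n$ vertices, $m$ edges and $r\ge 2$, and let $\mathcal Q(G)$ be its Q-graph. Let $a,b$ be distinct vertices of $\mathcal Q(G)$ with either $a,b\in V(G)$ or $a,b\in I(G)$. Then for each Laplacian eigenvalue $\theta\neq 2r$ of $G$, $\theta^{+}\in \mathrm{supp}_{L_{\mathcal Q(G)}}(\mathbf e_a-\mathbf e_b)$ if and only if $\theta^{-}\in \mathrm{supp}_{L_{\mathcal Q(G)}}(\mathbf e_a-\mathbf e_b)$. Moreover, if $\mathbf e_a-\mathbf e_b$ and $\mathbf e_c-\mathbf e_d$ are two pair states of $\mathcal Q(G)$ that are Laplacian strongly cospectral, then $\theta^+\in\Lambda^+_{ab,cd}$ if and only if $\theta^-\in\Lambda^+_{ab,cd}$, and $\theta^+\in\Lambda^-_{ab,cd}$ if and only if $\theta^-\in\Lambda^-_{ab,cd}$.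
   Context: For a simple graph $H$, $L_H=D_H-A_H$ is its Laplacian (degree matrix minus adjacency matrix), and $L_H=\sum_\theta \theta F_\theta$ its spectral decomposition over distinct eigenvalues, with $F_\theta$ the orthogonal projection onto the $\theta$-eigenspace. $\mathbf e_u$ is the characteristic vector of vertex $u$; for distinct vertices $a,b$, $\mathbf e_a-\mathbf e_b$ is a pair state, and $\mathrm{supp}_{L_H}(\mathbf e_a-\mathbf e_b)=\{\theta: F_\theta(\mathbf e_a-\mathbf e_b)\neq \mathbf 0\}$. Two pair states $\mathbf e_a-\mathbf e_b$, $\mathbf e_c-\mathbf e_d$ are Laplacian strongly cospectral if $F_\theta(\mathbf e_a-\mathbf e_b)=\pm F_\theta(\mathbf e_c-\mathbf e_d)$ for every eigenvalue $\theta$ of $L_H$. Set $\Lambda^{\pm}_{ab,cd}=\{\theta\in\mathrm{supp}_{L_H}(\mathbf e_a-\mathbf e_b): F_\theta(\mathbf e_a-\mathbf e_b)=\pm F_\theta(\mathbf e_c-\mathbf e_d)\}$ (here $H=\mathcal Q(G)$). The Q-graph $\mathcal Q(G)$ is obtained from $G$ by inserting a new vertex into each edge of $G$ and joining by an edge each pair of new vertices lying on adjacent (incident) edges of $G$; the set of new vertices is $I(G)$, so $V(\mathcal Q(G))=V(G)\cup I(G)$. For a Laplacian eigenvalue $\theta$ of $G$, $\theta^{\pm}=\frac12\big(\theta+2+r\pm\sqrt{(r+2-\theta)^2+4\theta}\big)$; these are Laplacian eigenvalues of $\mathcal Q(G)$. *)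

From HB Require Import structures.
From mathcomp Require Import all_boot all_order all_algebra.
Set Implicit Arguments. Unset Strict Implicit. Unset Printing Implicit Defensive.
Import Order.TTheory GRing.Theory Num.Theory.
Local Open Scope ring_scope.

(* A simple graph on a finite type T is given by an adjacency relation
   [adj : rel T], assumed symmetric and irreflexive where needed. *)

Section Laplacian.
Variables (R : rcfType) (T : finType) (adj : rel T).

Definition deg (x : T) : nat := #|[set y | adj x y]|.

Definition lap : 'M[R]_#|T| :=
  \matrix_(i, j) (if i == j then (deg (enum_val i))%:R
                  else - (adj (enum_val i) (enum_val j))%:R).

Definition evec (u : T) : 'rV[R]_#|T| := delta_mx 0 (enum_rank u).

End Laplacian.

Section Spectral.
Variables (R : rcfType) (n : nat).

(* Orthogonal projection onto the theta-eigenspace of A (row-vector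
   convention: v lies in the eigenspace iff v *m A = theta *: v).
   With B a row basis of the eigenspace, F = B^T (B B^T)^-1 B. *)
Definition eigproj (A : 'M[R]_n) (theta : R) : 'M[R]_n :=
  let B := row_base (eigenspace A theta) in
  B^T *m invmx (B *m B^T) *m B.

Definition in_supp (A : 'M[R]_n) (x : 'rV[R]_n) (theta : R) : Prop :=
  x *m eigproj A theta != 0.

Definition strongly_cospectral (A : 'M[R]_n) (x y : 'rV[R]_n) : Prop :=
  forall theta, eigenvalue A theta ->
    x *m eigproj A theta = y *m eigproj A theta \/
    x *m eigproj A theta = - (y *m eigproj A theta).

Definition in_LambdaP (A : 'M[R]_n) (x y : 'rV[R]_n) (theta : R) : Prop :=
  in_supp A x theta /\ x *m eigproj A theta = y *m eigproj A theta.
Definition in_LambdaM (A : 'M[R]_n) (x y : 'rV[R]_n) (theta : R) : Prop :=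
  in_supp A x theta /\ x *m eigproj A theta = - (y *m eigproj A theta).

End Spectral.

Section QGraph.
Variables (V : finType) (adj : rel V).

Definition is_edge (s : {set V}) : bool :=
  [exists x, exists y, adj x y && (s == [set x; y])].

Definition edgeT := {s : {set V} | is_edge s}.

(* vertex set of Q(G): V(G) (inl) together with I(G) (inr, one new
   vertex per edge of G) *)
Definition QV := (V + edgeT)%type.

Definition isV (u : QV) : bool := if u is inl _ then true else false.

Definition qadj (u w : QV) : bool :=
  match u, w with
  | inl x, inl y => false
  | inl x, inr f => x \in val f
  | inr f, inl x => x \in val f
  | inr f, inr g => (f != g) && [exists x, (x \in val f) && (x \in val g)]
  end.

End QGraph.

Definition theta_p (R : rcfType) (r : nat) (theta : R) : R :=
  (theta + 2 + r%:R + Num.sqrt ((r%:R + 2 - theta) ^+ 2 + 4 * theta)) / 2.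
Definition theta_m (R : rcfType) (r : nat) (theta : R) : R :=
  (theta + 2 + r%:R - Num.sqrt ((r%:R + 2 - theta) ^+ 2 + 4 * theta)) / 2.

From mathcomp Require Import all_boot all_order all_algebra.
From mathcomp Require Import polyrcf complex.
From mathcomp Require Import ring lra.
Set Implicit Arguments. Unset Strict Implicit. Unset Printing Implicit Defensive.
Import Order.TTheory GRing.Theory Num.Theory.
Local Open Scope ring_scope.

(* For an r-regular G, every eigenvector of L_Q(G) for an eigenvalue l with
   l^2 - (r + 2 + theta) l + (r + 1) theta = 0 and theta <> 2r is the lift
   x |-> (alpha x_v at v in V(G), x_p + x_q at the new vertex of pq), with
   alpha = 2 + theta - l <> 0, of a theta-eigenvector x of L_G; theta^+ and
   theta^- are the two roots.  A vector supported on V(G) alone, or on I(G)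
   alone, pairs with the two lifts of x up to the nonzero factor alpha or 1, so
   it is orthogonal to the theta^+-eigenspace iff it is orthogonal to the
   theta^--eigenspace.  This gives the support claim directly, and the Lambda
   claims once e_c - e_d is known to live on the same side as e_a - e_b: the
   lift of the all-ones vector (theta = 0) rules out a split pair, and a
   V-pair e_p - e_q strongly cospectral with an I-pair would be orthogonal to
   every eigenvector of L_G outside the eigenvalue r - 2, hence (L_G being
   symmetric) itself an (r - 2)-eigenvector, which row p of L_G forbids. *)

Local Notation dot u v := ((u *m v^T) 0 0).

Section RealSymmetric.
Variable R : rcfType.

Lemma dotE n (u v : 'rV[R]_n) : dot u v = \sum_i u 0 i * v 0 i.
Proof. by rewrite !mxE; apply: eq_bigr => i _; rewrite mxE. Qed.

Lemma dotDl n (u v w : 'rV[R]_n) : dot (u + v) w = dot u w + dot v w.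
Proof. by rewrite mulmxDl mxE. Qed.

Lemma dotNl n (u w : 'rV[R]_n) : dot (- u) w = - dot u w.
Proof. by rewrite mulNmx mxE. Qed.

Lemma dotZl n a (u w : 'rV[R]_n) : dot (a *: u) w = a * dot u w.
Proof. by rewrite -scalemxAl mxE. Qed.

Lemma dot_self_ge0 n (v : 'rV[R]_n) : 0 <= dot v v.
Proof. by rewrite dotE sumr_ge0 // => i _; rewrite -expr2 sqr_ge0. Qed.

Lemma dot_self_eq0 n (v : 'rV[R]_n) : (dot v v == 0) = (v == 0).
Proof.
apply/idP/eqP => [|->]; last by rewrite mul0mx mxE.
rewrite dotE psumr_eq0 => [/allP v0|i _]; last by rewrite -expr2 sqr_ge0.
apply/rowP => i; rewrite mxE.
by have := v0 i (mem_index_enum i); rewrite -expr2 sqrf_eq0 => /eqP.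
Qed.

Lemma mx11_eq0 (M : 'M[R]_1) : (M == 0) = (M 0 0 == 0).
Proof.
apply/eqP/eqP => [->|M0]; first by rewrite mxE.
by apply/matrixP => i j; rewrite !ord1 M0 mxE.
Qed.

Lemma row_free_mul_tr_unit m n (B : 'M[R]_(m, n)) :
  row_free B -> B *m B^T \in unitmx.
Proof.
move=> fB; rewrite -row_free_unit; apply: inj_row_free => v vBB0.
have /eqP : (v *m B) *m (v *m B)^T = 0.
  by rewrite trmx_mul !mulmxA -(mulmxA v) vBB0 !mul0mx.
by rewrite mx11_eq0 dot_self_eq0 mulmx_free_eq0 // => /eqP.
Qed.

Lemma mulmx_tr_eq0 m n (z : 'rV[R]_n) (X : 'M[R]_(m, n)) :
  (forall j, dot z (row j X) = 0) -> z *m X^T = 0.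
Proof.
move=> zX; apply/rowP => j; rewrite [RHS]mxE -(zX j) !mxE.
by apply: eq_bigr => k _; rewrite !mxE.
Qed.

Lemma eigproj_eq0 n (A : 'M[R]_n) th (z : 'rV[R]_n) :
  z *m eigproj A th = 0 <-> forall w : 'rV_n, w *m A = th *: w -> dot z w = 0.
Proof.
rewrite /eigproj; set B := row_base _.
have fB : row_free B := row_base_free _.
have eigB w : (w <= B)%MS = (w *m A == th *: w).
  by rewrite eq_row_base; apply/eigenspaceP/eqP.
clearbody B.
transitivity (z *m B^T = 0).
  rewrite !mulmxA; split=> [|->]; last by rewrite !mul0mx.
  move/eqP; rewrite mulmx_free_eq0 // mulmx_free_eq0 ?row_free_unit ?unitmx_inv //.
    by move/eqP.
  exact: row_free_mul_tr_unit.
split=> [zB w /eqP | zw].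
  by rewrite -eigB => /submxP [D ->]; rewrite trmx_mul mulmxA zB mul0mx mxE.
by apply: mulmx_tr_eq0 => j; apply: zw; apply/eqP; rewrite -eigB row_sub.
Qed.

Lemma symmetric_eigen_pair_real n (A : 'M[R]_n) (a b : R) (x y : 'rV[R]_n) :
  A^T = A -> x *m A = a *: x - b *: y -> y *m A = b *: x + a *: y ->
  (x != 0) || (y != 0) -> b = 0.
Proof.
move=> As xA yA xy0.
have sym : dot (x *m A) y = dot x (y *m A) by rewrite [(y *m A)^T]trmx_mul As mulmxA.
have : b * (dot x x + dot y y) = 0.
  rewrite -(subrr (dot (x *m A) y)) {1}sym xA yA !dotE -sumrB -big_split mulr_sumr /=.
  by apply: eq_bigr => i _; rewrite !mxE; ring.
move/eqP; rewrite mulf_eq0 paddr_eq0 ?dot_self_ge0 // !dot_self_eq0.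
by case/orP => [/eqP //|/andP [/eqP x0 /eqP y0]]; move: xy0; rewrite x0 y0 eqxx.
Qed.

(* Real and imaginary parts of an eigenvector of M over R[i]. *)
Lemma real_invariant_pair k (M : 'M[R]_k) : (0 < k)%N ->
  exists a b (x y : 'rV[R]_k),
    [/\ (x != 0) || (y != 0), x *m M = a *: x - b *: y & y *m M = b *: x + a *: y].
Proof.
move=> k_gt0; pose Mc := map_mx (real_complex R) M.
have [om /eigenvalueP [u uM u0]] := eigenvalue_closed Mc k_gt0.
exists (complex.Re om), (complex.Im om).
exists (map_mx (@complex.Re R) u), (map_mx (@complex.Im R) u); split.
- apply: contraNT u0; rewrite negb_or !negbK => /andP [/eqP re0 /eqP im0].
  apply/eqP; apply/rowP => i; move/rowP/(_ i): re0; move/rowP/(_ i): im0; rewrite !mxE.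
  by case: (u 0 i) => ? ? /= -> ->.
- apply/rowP => j; move/rowP/(_ j)/(congr1 (@complex.Re R)): uM.
  rewrite !mxE (raddf_sum (@complex.Re R : Rcomplex R -> R)) => uMj.
  transitivity (complex.Re (om * u 0 j)).
    rewrite -uMj; apply: eq_bigr => i _; rewrite !mxE.
    by case: (u 0 i) => ? ? /=; rewrite mulr0 subr0.
  by clear uMj; case: om; case: (u 0 j).
- apply/rowP => j; move/rowP/(_ j)/(congr1 (@complex.Im R)): uM.
  rewrite !mxE (raddf_sum (@complex.Im R : Rcomplex R -> R)) => uMj.
  transitivity (complex.Im (om * u 0 j)).
    rewrite -uMj; apply: eq_bigr => i _; rewrite !mxE.
    by case: (u 0 i) => ? ? /=; rewrite mulr0 add0r.
  by clear uMj; case: om; case: (u 0 j) => ? ? ? ? /=; rewrite addrC.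
Qed.

Lemma symmetric_stable_eigenvector n (A : 'M[R]_n) m (W : 'M[R]_(m, n)) :
  A^T = A -> stablemx W A -> W != 0 ->
  exists mu, exists2 v : 'rV[R]_n, (v <= W)%MS && (v != 0) & v *m A = mu *: v.
Proof.
move=> As WA W0; have BW : (row_base W <= W)%MS by rewrite eq_row_base.
have BA : (row_base W *m A <= row_base W)%MS.
  by rewrite (eqmxMr A (eq_row_base W)) !eq_row_base.
have fB := row_base_free W; set B := row_base W in BW BA fB.
have BM : B *m A *m pinvmx B *m B = B *m A by rewrite mulmxKpV.
have [|a [b [x [y [xy0 xM yM]]]]] := real_invariant_pair (B *m A *m pinvmx B).
  by rewrite lt0n mxrank_eq0.
have liftA (z z1 z2 : 'rV_(\rank W)) c d :
    z *m (B *m A *m pinvmx B) = c *: z1 + d *: z2 ->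
    z *m B *m A = c *: (z1 *m B) + d *: (z2 *m B).
  by move=> zM; rewrite -mulmxA -BM mulmxA zM mulmxDl -!scalemxAl.
have xA : x *m B *m A = a *: (x *m B) - b *: (y *m B).
  by rewrite -scaleNr; apply: liftA; rewrite xM scaleNr.
have yA := liftA _ _ _ _ _ yM.
have xyB0 : (x *m B != 0) || (y *m B != 0) by rewrite !mulmx_free_eq0.
have b0 := symmetric_eigen_pair_real As xA yA xyB0.
rewrite b0 scale0r subr0 in xA; rewrite b0 scale0r add0r in yA.
have subW z : (z *m B <= W)%MS by apply: submx_trans (submxMl _ _) BW.
exists a; case/orP: xyB0 => ?; [exists (x *m B) | exists (y *m B)]; by rewrite ?subW.
Qed.

Lemma stablemx_kermx_tr n m (A : 'M[R]_n) (E : 'M[R]_(m, n)) :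
  A^T = A -> stablemx E A -> stablemx (kermx E^T) A.
Proof.
move=> As /submxP [D ED]; rewrite sub_kermx.
have AEt : A *m E^T = E^T *m D^T by rewrite -As -trmx_mul ED trmx_mul.
by rewrite -mulmxA AEt mulmxA mulmx_ker mul0mx.
Qed.

(* The orthogonal complement of the sum E of the eigenspaces of A is A-stable,
   so if it were nonzero it would contain an eigenvector outside E. *)
Lemma orth_eigenvectors_eq0 n (A : 'M[R]_n) (z : 'rV[R]_n) : A^T = A ->
  (forall mu (w : 'rV[R]_n), w *m A = mu *: w -> dot z w = 0) -> z = 0.
Proof.
move=> As zw; pose s := rootsR (char_poly A).
pose E := (\sum_(i < size s) eigenspace A s`_i)%MS.
have eigE mu (v : 'rV[R]_n) : v *m A = mu *: v -> (v <= E)%MS.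
  have [-> _|v0 vA] := eqVneq v 0; first exact: sub0mx.
  have mus : mu \in s.
    have: eigenvalue A mu by apply/eigenvalueP; exists v.
    rewrite eigenvalue_root_char => rt.
    have := roots_on_rootsR (monic_neq0 (char_poly_monic A)) mu.
    by rewrite rt andbT => <-; rewrite in_itv.
  have mu_idx : (index mu s < size s)%N by rewrite index_mem.
  apply: (sumsmx_sup (Ordinal mu_idx)) => //=.
  by rewrite nth_index //; apply/eigenspaceP.
have zE : z *m E^T = 0.
  have /sub_sumsmxP [D ->] := submx_refl E.
  rewrite raddf_sum mulmx_sumr big1 // => i _ /=; rewrite trmx_mul mulmxA.
  suff -> : z *m (eigenspace A s`_i)^T = 0 by rewrite mul0mx.
  by apply: mulmx_tr_eq0 => j; apply: (zw s`_i); apply/eigenspaceP; apply: row_sub.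
apply/eqP; apply: contraT => z0; exfalso.
have zW : (z <= kermx E^T)%MS by rewrite sub_kermx zE.
have W0 : kermx E^T != 0 by apply: contraNneq z0 => W0; move: zW; rewrite W0 submx0.
have EA : stablemx E A.
  apply: stablemx_sums => i.
  by have /eigenspaceP -> := submx_refl (eigenspace A s`_i); rewrite scalemx_sub.
have [mu [v /andP [vW v0] vA]] :=
  symmetric_stable_eigenvector As (stablemx_kermx_tr As EA) W0.
case/submxP: (eigE _ _ vA) => D vD.
move: v0; rewrite -dot_self_eq0 -mx11_eq0 {2}vD trmx_mul mulmxA (sub_kermxP vW) mul0mx.
by rewrite eqxx.
Qed.

Lemma eigen_of_orth_other_eigenvectors n (A : 'M[R]_n) th (s : 'rV[R]_n) :
  A^T = A ->
  (forall mu (w : 'rV[R]_n), mu != th -> w *m A = mu *: w -> dot s w = 0) ->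
  s *m A = th *: s.
Proof.
move=> As sw; apply/eqP; rewrite -subr_eq0; apply/eqP.
apply: (orth_eigenvectors_eq0 As) => mu w wA.
have sAw : dot (s *m A) w = mu * dot s w.
  by rewrite -mulmxA -[A]As -trmx_mul wA linearZ /= -scalemxAr mxE.
rewrite dotDl dotNl dotZl sAw -mulrBl.
by have [->|ne] := eqVneq mu th; [rewrite subrr mul0r | rewrite (sw mu w ne wA) mulr0].
Qed.

Lemma strongly_cospectral_dot_sqr n (A : 'M[R]_n) (X Y z : 'rV[R]_n) l :
  strongly_cospectral A X Y -> z *m A = l *: z -> dot X z ^+ 2 = dot Y z ^+ 2.
Proof.
move=> XY zA; have [-> | z0] := eqVneq z 0; first by rewrite trmx0 !mulmx0.
have /XY [XYl|XYl] : eigenvalue A l by apply/eigenvalueP; exists z.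
- have /eigproj_eq0/(_ z zA) : (X - Y) *m eigproj A l = 0 by rewrite mulmxBl XYl subrr.
  by rewrite dotDl dotNl => /eqP; rewrite subr_eq0 => /eqP ->.
- have /eigproj_eq0/(_ z zA) : (X + Y) *m eigproj A l = 0 by rewrite mulmxDl XYl addNr.
  by rewrite dotDl => /eqP; rewrite addr_eq0 => /eqP ->; rewrite sqrrN.
Qed.

Lemma strongly_cospectral_sym n (A : 'M[R]_n) (X Y : 'rV[R]_n) :
  strongly_cospectral A X Y -> strongly_cospectral A Y X.
Proof. by move=> XY th /XY [->|->]; [left | right; rewrite opprK]. Qed.

End RealSymmetric.

Section Laplacian.
Variables (R : rcfType) (T : finType) (e : rel T).

Lemma deg_sum (u : T) : (deg e u)%:R = \sum_w (e u w)%:R :> R.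
Proof.
rewrite /deg -sum1_card natr_sum big_mkcond /=.
by apply: eq_bigr => w _; rewrite inE; case: (e u w).
Qed.

Lemma sum_enum_rank (F : 'I_#|T| -> R) : \sum_i F i = \sum_w F (enum_rank w).
Proof. by rewrite (reindex enum_rank) //; apply: onW_bij; apply: enum_rank_bij. Qed.

Lemma dot_evec (u : T) (z : 'rV[R]_#|T|) : dot (evec R u) z = z 0 (enum_rank u).
Proof. by rewrite -rowE !mxE. Qed.

Lemma dot_evecB (a b : T) (z : 'rV[R]_#|T|) :
  dot (evec R a - evec R b) z = z 0 (enum_rank a) - z 0 (enum_rank b).
Proof. by rewrite dotDl dotNl !dot_evec. Qed.

Hypotheses (e_sym : symmetric e) (e_irr : irreflexive e).

Lemma lap_tr : (lap R e)^T = lap R e.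
Proof.
by apply/matrixP => i j; rewrite !mxE eq_sym; case: eqP => [->|_] //; rewrite e_sym.
Qed.

Lemma lap_row (z : 'rV[R]_#|T|) (u : T) : (z *m lap R e) 0 (enum_rank u) =
  \sum_w (e u w)%:R * (z 0 (enum_rank u) - z 0 (enum_rank w)).
Proof.
under eq_bigr do rewrite mulrBr; rewrite sumrB -big_distrl -deg_sum /=.
rewrite mxE sum_enum_rank (bigD1 u) //= mxE eqxx enum_rankK mulrC.
congr (_ + _); rewrite [in RHS](bigD1 u) //= e_irr mul0r add0r -sumrN.
apply: eq_bigr => w wu; rewrite mxE (inj_eq enum_rank_inj) (negPf wu) !enum_rankK e_sym.
by rewrite mulrN mulrC.
Qed.

End Laplacian.

Lemma sum_set2 (R : pzSemiRingType) (T : finType) (p q : T) (h : T -> R) : p != q ->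
  \sum_y (y \in [set p; q])%:R * h y = h p + h q.
Proof.
move=> pq; transitivity (\sum_(y in [set p; q]) h y).
  rewrite [RHS]big_mkcond /=; apply: eq_bigr => y _.
  by case: (y \in _); rewrite ?mul1r ?mul0r.
by rewrite big_setU1 ?big_set1 ?in_set1.
Qed.

Section QGraph.
Variables (R : rcfType) (V : finType) (adj : rel V).
Hypotheses (adj_sym : symmetric adj) (adj_irr : irreflexive adj).
Local Notation E := (edgeT adj).

Lemma edge_ends (f : E) : exists p q, [/\ adj p q, p != q & val f = [set p; q]].
Proof.
have /existsP [p /existsP [q /andP [apq /eqP ->]]] := valP f.
by exists p, q; split => //; apply: contraTneq apq => ->; rewrite adj_irr.
Qed.

Lemma qadj_sym : symmetric (@qadj V adj).
Proof.
move=> [x|f] [y|g] //=; rewrite eq_sym; congr (_ && _).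
by apply/existsP/existsP => [] [z /andP [? ?]]; exists z; apply/andP.
Qed.

Lemma qadj_irr : irreflexive (@qadj V adj).
Proof. by move=> [x|f] //=; rewrite eqxx. Qed.

Lemma sum_edges_at (v : V) (g : {set V} -> R) :
  \sum_(f : E) (v \in val f)%:R * g (val f) = \sum_w (adj v w)%:R * g [set v; w].
Proof.
have edge_vw w : adj v w -> is_edge adj [set v; w].
  by move=> vw; apply/existsP; exists v; apply/existsP; exists w; rewrite vw eqxx.
rewrite -(big_sub_cond (is_edge adj) predT (fun s => (v \in s)%:R * g s)) /=.
transitivity (\sum_(s in [set [set v; w] | w in [set w | adj v w]]) g s).
  rewrite big_mkcond [RHS]big_mkcond /=; apply: eq_bigr => s _.
  rewrite andbT -[s \in is_edge adj]/(is_edge adj s).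
  have [/imsetP [w]|nI] := boolP (s \in [set [set v; w] | w in [set w | adj v w]]).
    by rewrite inE => vw ->; rewrite edge_vw // set21 mul1r.
  case: (boolP (is_edge adj s)) => //= /existsP [x /existsP [y /andP [axy /eqP sxy]]].
  case: (boolP (v \in s)) => vs; rewrite ?mul0r ?mul1r //.
  move/negP: nI; case; move: vs; rewrite sxy => /set2P [] ->.
    by apply/imsetP; exists y; rewrite ?inE.
  by apply/imsetP; exists x; rewrite ?inE 1?adj_sym // setUC.
rewrite big_imset /=; last first.
  move=> w w'; rewrite !inE => vw vw' /setP /(_ w); rewrite set22 => /esym /set2P [] // wv.
  by rewrite wv adj_irr in vw.
rewrite big_mkcond /=; apply: eq_bigr => w _; rewrite inE.
by case: (adj v w); rewrite ?mul1r ?mul0r.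
Qed.

Lemma card_edges_at v : \sum_(f : E) (v \in val f)%:R = (deg adj v)%:R :> R.
Proof.
rewrite deg_sum; have := sum_edges_at v (fun _ => 1).
under eq_bigr do rewrite mulr1.
by move=> ->; apply: eq_bigr => w _; rewrite mulr1.
Qed.

Lemma qadj_edge_edge (e f : E) p q : p != q -> val e = [set p; q] -> f != e ->
  (qadj (inr e) (inr f))%:R = (p \in val f)%:R + (q \in val f)%:R :> R.
Proof.
move=> pq ep fe /=; rewrite eq_sym fe /=.
have -> : [exists x, (x \in val e) && (x \in val f)] = (p \in val f) || (q \in val f).
  rewrite ep; apply/existsP/orP => [[x /andP [/set2P [] -> ->]]|[pf|qf]].
  - by left.
  - by right.
  - by exists p; rewrite set21 pf.
  - by exists q; rewrite set22 qf.
have : ~~ ((p \in val f) && (q \in val f)).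
  apply: contra fe => /andP [pf qf]; have [x [y [_ xy fxy]]] := edge_ends f.
  have : [set p; q] == val f.
    rewrite eqEcard fxy !cards2 xy pq andbT.
    by apply/subsetP => z /set2P [] ->; rewrite -fxy.
  by rewrite -ep => /eqP /val_inj ->.
by case: (p \in val f); case: (q \in val f); rewrite /= ?addr0 ?add0r.
Qed.

End QGraph.

Section QPoly.
Variables (R : rcfType) (r : nat).

Definition qpoly (th l : R) := l ^+ 2 - (r%:R + 2 + th) * l + (r%:R + 1) * th.

Lemma qpoly_vertex th l : qpoly th l = 0 ->
  th + r%:R * (2 + th - l - 2) = l * (2 + th - l).
Proof. by move=> f0; apply/eqP; rewrite -subr_eq0 -f0 /qpoly; apply/eqP; ring. Qed.

Lemma qpoly_edge th l : qpoly th l = 0 ->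
  (r%:R + 1 - l) * (2 + th - l) = 2 * r%:R + 2 - l.
Proof. by move=> f0; apply/eqP; rewrite -subr_eq0 -f0 /qpoly; apply/eqP; ring. Qed.

Lemma qpoly_alpha_neq0 th l : qpoly th l = 0 -> th != 2 * r%:R -> 2 + th - l != 0.
Proof.
move=> f0; apply: contraNneq => /eqP; rewrite subr_eq0 => /eqP l_def.
by rewrite -subr_eq0 -f0 -l_def /qpoly; apply/eqP; ring.
Qed.

Lemma qpoly_r1_neq0 th l : qpoly th l = 0 -> r%:R + 1 - l != 0.
Proof.
move=> f0; apply/eqP => /eqP; rewrite subr_eq0 => /eqP l_def.
have : qpoly th l = - (r%:R + 1) by rewrite -l_def /qpoly; ring.
by rewrite f0; have := ler0n R r; lra.
Qed.

Let disc (th : R) := (r%:R + 2 - th) ^+ 2 + 4 * th.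

Lemma disc_gt0 (th : R) : 0 < disc th.
Proof.
have -> : disc th = (th - r%:R) ^+ 2 + 4 * (r%:R + 1) by rewrite /disc; ring.
by rewrite ltr_wpDl ?sqr_ge0 // mulr_gt0 // ltr_wpDl ?ler0n.
Qed.

Lemma qpoly_theta_p (th : R) : qpoly th (theta_p r th) = 0.
Proof.
have -> : qpoly th (theta_p r th) = (Num.sqrt (disc th) ^+ 2 - disc th) / 4.
  by rewrite /qpoly /theta_p /disc; field.
by rewrite sqr_sqrtr ?subrr ?mul0r // ltW // disc_gt0.
Qed.

Lemma qpoly_theta_m (th : R) : qpoly th (theta_m r th) = 0.
Proof.
have -> : qpoly th (theta_m r th) = (Num.sqrt (disc th) ^+ 2 - disc th) / 4.
  by rewrite /qpoly /theta_m /disc; field.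
by rewrite sqr_sqrtr ?subrr ?mul0r // ltW // disc_gt0.
Qed.

Lemma theta_p_neq_m (th : R) : theta_p r th != theta_m r th.
Proof.
rewrite -subr_eq0; have -> : theta_p r th - theta_m r th = Num.sqrt (disc th).
  by rewrite /theta_p /theta_m /disc; field.
by rewrite gt_eqF // sqrtr_gt0 disc_gt0.
Qed.

Lemma theta_pD (th : R) : theta_p r th + theta_m r th = th + 2 + r%:R.
Proof. by rewrite /theta_p /theta_m; field. Qed.

End QPoly.

Section QSpectrum.
Variables (R : rcfType) (V : finType) (adj : rel V) (r : nat).
Hypotheses (adj_sym : symmetric adj) (adj_irr : irreflexive adj).
Hypothesis regular : forall v, deg adj v = r.
Local Notation E := (edgeT adj).
Local Notation T := (QV adj).
Local Notation LG := (lap R adj).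
Local Notation LQ := (lap R (@qadj V adj)).
Local Notation rk := enum_rank.

Definition edge_sum (x : 'rV[R]_#|V|) (s : {set V}) := \sum_w (w \in s)%:R * x 0 (rk w).

Definition qval (al : R) (x : 'rV[R]_#|V|) (u : T) : R :=
  match u with inl v => al * x 0 (rk v) | inr f => edge_sum x (val f) end.

Definition qlift al x : 'rV[R]_#|{: T}| := \row_i qval al x (enum_val i).

Lemma qliftE al x u : qlift al x 0 (rk u) = qval al x u.
Proof. by rewrite mxE enum_rankK. Qed.

Lemma edge_sum2 x p q : p != q -> edge_sum x [set p; q] = x 0 (rk p) + x 0 (rk q).
Proof. exact: sum_set2. Qed.

Lemma lapG_row (x : 'rV[R]_#|V|) v :
  (x *m LG) 0 (rk v) = r%:R * x 0 (rk v) - \sum_w (adj v w)%:R * x 0 (rk w).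
Proof.
rewrite lap_row //; under eq_bigr do rewrite mulrBr.
by rewrite sumrB -big_distrl /= -deg_sum regular.
Qed.

Lemma sum_edges_at_sub v c (g : E -> R) :
  \sum_(f : E) (v \in val f)%:R * (c - g f) =
  r%:R * c - \sum_(f : E) (v \in val f)%:R * g f.
Proof.
under eq_bigr do rewrite mulrBr.
by rewrite sumrB -big_distrl /= card_edges_at // regular.
Qed.

Lemma sum_edges_at_edge_sum x v :
  \sum_(f : E) (v \in val f)%:R * edge_sum x (val f) =
  r%:R * x 0 (rk v) + \sum_w (adj v w)%:R * x 0 (rk w).
Proof.
rewrite sum_edges_at //.
transitivity (\sum_w ((adj v w)%:R * x 0 (rk v) + (adj v w)%:R * x 0 (rk w))).
  apply: eq_bigr => w _; have [vw|] := boolP (adj v w); last by rewrite !mul0r addr0.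
  by rewrite edge_sum2 ?mulrDr //; apply: contraTneq vw => ->; rewrite adj_irr.
by rewrite big_split -big_distrl /= -deg_sum regular.
Qed.

Lemma lapQ_row_inl (z : 'rV[R]_#|{: T}|) v : (z *m LQ) 0 (rk (inl v)) =
  r%:R * z 0 (rk (inl v)) - \sum_(f : E) (v \in val f)%:R * z 0 (rk (inr f)).
Proof.
rewrite lap_row; [|exact: qadj_sym|exact: qadj_irr].
rewrite big_sumType /= big1 ?add0r => [|y _]; last by rewrite mul0r.
exact: sum_edges_at_sub.
Qed.

Lemma lapQ_row_inr (z : 'rV[R]_#|{: T}|) e p q : p != q -> val e = [set p; q] ->
  (z *m LQ) 0 (rk (inr e)) =
    (2 * r%:R + 2) * z 0 (rk (inr e)) - z 0 (rk (inl p)) - z 0 (rk (inl q))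
    - \sum_(f : E) (p \in val f)%:R * z 0 (rk (inr f))
    - \sum_(f : E) (q \in val f)%:R * z 0 (rk (inr f)).
Proof.
move=> pq ep; set ze := z 0 (rk (inr e)).
have sumV : \sum_(y : V) (qadj (inr e) (inl y))%:R * (ze - z 0 (rk (inl y))) =
    (ze - z 0 (rk (inl p))) + (ze - z 0 (rk (inl q))).
  by rewrite /= ep sum_set2.
have sumE : \sum_(f : E) (qadj (inr e) (inr f))%:R * (ze - z 0 (rk (inr f))) =
    \sum_(f : E) (p \in val f)%:R * (ze - z 0 (rk (inr f))) +
    \sum_(f : E) (q \in val f)%:R * (ze - z 0 (rk (inr f))).
  rewrite -big_split; apply: eq_bigr => f _.
  have [->|fe] := eqVneq f e; first by rewrite /ze !subrr !mulr0 /= addr0.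
  by rewrite (qadj_edge_edge _ adj_irr pq ep fe) /= mulrDl.
rewrite lap_row; [|exact: qadj_sym|exact: qadj_irr].
by rewrite big_sumType sumV sumE /= !sum_edges_at_sub; ring.
Qed.

Lemma qlift_lapQ_inl al x v : (qlift al x *m LQ) 0 (rk (inl v)) =
  (x *m LG) 0 (rk v) + r%:R * (al - 2) * x 0 (rk v).
Proof.
rewrite lapQ_row_inl qliftE /=; under eq_bigr do rewrite qliftE /=.
by rewrite sum_edges_at_edge_sum lapG_row; ring.
Qed.

Lemma qlift_lapQ_inr al x e p q : p != q -> val e = [set p; q] ->
  (qlift al x *m LQ) 0 (rk (inr e)) =
  (x *m LG) 0 (rk p) + (x *m LG) 0 (rk q) + (2 - al) * (x 0 (rk p) + x 0 (rk q)).
Proof.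
move=> pq ep; rewrite (lapQ_row_inr _ pq ep) !qliftE /=.
under eq_bigr do rewrite qliftE /=; under [X in _ - X]eq_bigr do rewrite qliftE /=.
by rewrite !sum_edges_at_edge_sum !lapG_row ep edge_sum2 //; ring.
Qed.

Lemma qlift_eigen th l x : x *m LG = th *: x -> qpoly r th l = 0 ->
  qlift (2 + th - l) x *m LQ = l *: qlift (2 + th - l) x.
Proof.
move=> xLG f0; apply/rowP => i; rewrite -(enum_valK i) [RHS]mxE qliftE.
case: (enum_val i) => [v|e] /=.
  by rewrite qlift_lapQ_inl xLG mxE [RHS]mulrA -mulrDl qpoly_vertex.
have [p [q [_ pq ep]]] := edge_ends adj_irr e.
by rewrite (qlift_lapQ_inr _ _ pq ep) xLG !mxE ep edge_sum2 //; ring.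
Qed.

Lemma lapQ_eigen_inl l (z : 'rV[R]_#|{: T}|) v : z *m LQ = l *: z ->
  \sum_(f : E) (v \in val f)%:R * z 0 (rk (inr f)) = (r%:R - l) * z 0 (rk (inl v)).
Proof.
move=> zLQ; have := lapQ_row_inl z v; rewrite zLQ mxE => zv.
by rewrite mulrBl zv; ring.
Qed.

Lemma lapQ_eigen_inr th l (z : 'rV[R]_#|{: T}|) e p q :
  qpoly r th l = 0 -> z *m LQ = l *: z -> p != q -> val e = [set p; q] ->
  (2 + th - l) * z 0 (rk (inr e)) = z 0 (rk (inl p)) + z 0 (rk (inl q)).
Proof.
move=> f0 zLQ pq ep; have := lapQ_row_inr z pq ep.
rewrite zLQ mxE !(lapQ_eigen_inl _ zLQ) => ze.
apply: (mulfI (qpoly_r1_neq0 f0)); rewrite mulrA qpoly_edge //.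
by apply/eqP; rewrite -subr_eq0 -(subrr (l * z 0 (rk (inr e)))) {1}ze; apply/eqP; ring.
Qed.

Lemma eigen_qlift th l (z : 'rV[R]_#|{: T}|) :
  qpoly r th l = 0 -> th != 2 * r%:R -> z *m LQ = l *: z ->
  exists2 x, x *m LG = th *: x & z = qlift (2 + th - l) x.
Proof.
move=> f0 thn zLQ; have al0 := qpoly_alpha_neq0 f0 thn.
set al := 2 + th - l in al0 *.
pose x : 'rV[R]_#|V| := \row_i (al^-1 * z 0 (rk (inl (enum_val i)))).
have xE v : x 0 (rk v) = al^-1 * z 0 (rk (inl v)) by rewrite mxE enum_rankK.
have zq : z = qlift al x.
  apply/rowP => i; rewrite -(enum_valK i) qliftE; case: (enum_val i) => [v|e] /=.
    by rewrite xE mulVKf.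
  have [p [q [_ pq ep]]] := edge_ends adj_irr e.
  apply: (mulfI al0); rewrite (lapQ_eigen_inr f0 zLQ pq ep) ep edge_sum2 // !xE.
  by rewrite mulrDr !mulVKf.
exists x => //; apply/rowP => i; rewrite -(enum_valK i) [RHS]mxE; set v := enum_val i.
have := qlift_lapQ_inl al x v; rewrite -zq zLQ mxE {1}zq qliftE /= => xv.
have -> : (x *m LG) 0 (rk v) = (l * al - r%:R * (al - 2)) * x 0 (rk v).
  by rewrite mulrBl -mulrA xv; ring.
by rewrite /al -(qpoly_vertex f0); ring.
Qed.

End QSpectrum.

Section QCospectral.
Variables (R : rcfType) (V : finType) (adj : rel V) (r : nat).
Hypotheses (adj_sym : symmetric adj) (adj_irr : irreflexive adj).
Hypothesis regular : forall v, deg adj v = r.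
Local Notation E := (edgeT adj).
Local Notation T := (QV adj).
Local Notation LG := (lap R adj).
Local Notation LQ := (lap R (@qadj V adj)).
Local Notation rk := enum_rank.
Local Notation qlift := (qlift adj).
Local Notation pair a b := (evec R a - evec R b).

Definition one_sided (s : bool) (Z : 'rV[R]_#|{: T}|) :=
  forall u, isV u != s -> Z 0 (rk u) = 0.

Lemma one_sided_pair s (a b : T) : isV a = s -> isV b = s -> one_sided s (pair a b).
Proof.
move=> <- bs u au; rewrite !mxE eqxx /= !(inj_eq enum_rank_inj).
have -> : (u == a) = false by apply: contraNF au => /eqP ->.
have -> : (u == b) = false by apply: contraNF au => /eqP ->; rewrite bs.
by rewrite subrr.
Qed.

Lemma one_sidedD s Z1 Z2 : one_sided s Z1 -> one_sided s Z2 -> one_sided s (Z1 + Z2).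
Proof. by move=> h1 h2 u us; rewrite mxE h1 ?h2 ?addr0. Qed.

Lemma one_sidedN s Z : one_sided s Z -> one_sided s (- Z).
Proof. by move=> h u us; rewrite mxE h ?oppr0. Qed.

Lemma dot_qlift_one_sided s Z al x : one_sided s Z ->
  dot Z (qlift al x) = (if s then al else 1) * dot Z (qlift 1 x).
Proof.
move=> Zs; rewrite !dotE mulr_sumr !sum_enum_rank; apply: eq_bigr => u _.
rewrite !qliftE; have [<-|us] := eqVneq (isV u) s; last by rewrite Zs // !mul0r mulr0.
by case: u => [v|f] /=; rewrite mul1r // mulrCA.
Qed.

Lemma qeigproj_eq0 th l (Z : 'rV[R]_#|{: T}|) :
  qpoly r th l = 0 -> th != 2 * r%:R ->
  Z *m eigproj LQ l = 0 <->
  forall x : 'rV_#|V|, x *m LG = th *: x -> dot Z (qlift (2 + th - l) x) = 0.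
Proof.
move=> f0 thn; rewrite eigproj_eq0; split=> Zorth x xLG.
  exact/Zorth/(qlift_eigen adj_sym adj_irr regular xLG f0).
by have [y yLG ->] := eigen_qlift adj_sym adj_irr regular f0 thn xLG; apply: Zorth.
Qed.

Lemma one_sided_qeigproj_eq0 s th l (Z : 'rV[R]_#|{: T}|) :
  qpoly r th l = 0 -> th != 2 * r%:R -> one_sided s Z ->
  Z *m eigproj LQ l = 0 <->
  forall x : 'rV_#|V|, x *m LG = th *: x -> dot Z (qlift 1 x) = 0.
Proof.
move=> f0 thn Zs; rewrite (qeigproj_eq0 Z f0 thn).
have k0 : (if s then 2 + th - l else 1) != 0.
  by case: (s); [exact: qpoly_alpha_neq0 f0 thn | exact: oner_neq0].
split=> Zorth x /Zorth; rewrite (dot_qlift_one_sided (2 + th - l) x Zs).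
  by move/eqP; rewrite mulf_eq0 (negPf k0) /= => /eqP.
by move=> ->; rewrite mulr0.
Qed.

Lemma one_sided_theta_pm s th (Z : 'rV[R]_#|{: T}|) :
  th != 2 * r%:R -> one_sided s Z ->
  Z *m eigproj LQ (theta_p r th) = 0 <-> Z *m eigproj LQ (theta_m r th) = 0.
Proof.
move=> thn Zs; rewrite (one_sided_qeigproj_eq0 (qpoly_theta_p r th) thn Zs).
by rewrite (one_sided_qeigproj_eq0 (qpoly_theta_m r th) thn Zs).
Qed.

Lemma in_supp_theta_pm s th (X : 'rV[R]_#|{: T}|) :
  th != 2 * r%:R -> one_sided s X ->
  in_supp LQ X (theta_p r th) <-> in_supp LQ X (theta_m r th).
Proof.
move=> thn Xs; have pm := one_sided_theta_pm thn Xs.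
by rewrite /in_supp; split=> /eqP nz; apply/eqP => X0; apply: nz; apply/pm.
Qed.

Lemma in_LambdaP_theta_pm s th (X Y : 'rV[R]_#|{: T}|) : th != 2 * r%:R ->
  one_sided s X -> one_sided s Y ->
  in_LambdaP LQ X Y (theta_p r th) <-> in_LambdaP LQ X Y (theta_m r th).
Proof.
move=> thn Xs Ys; have pm := one_sided_theta_pm thn (one_sidedD Xs (one_sidedN Ys)).
have eq_sub l : X *m eigproj LQ l = Y *m eigproj LQ l <-> (X - Y) *m eigproj LQ l = 0.
  by rewrite mulmxBl; split=> [->|/eqP]; [rewrite subrr | rewrite subr_eq0 => /eqP].
by rewrite /in_LambdaP !eq_sub pm (in_supp_theta_pm thn Xs).
Qed.

Lemma in_LambdaM_theta_pm s th (X Y : 'rV[R]_#|{: T}|) : th != 2 * r%:R ->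
  one_sided s X -> one_sided s Y ->
  in_LambdaM LQ X Y (theta_p r th) <-> in_LambdaM LQ X Y (theta_m r th).
Proof.
move=> thn Xs Ys; have pm := one_sided_theta_pm thn (one_sidedD Xs Ys).
have eq_opp l : X *m eigproj LQ l = - (Y *m eigproj LQ l) <-> (X + Y) *m eigproj LQ l = 0.
  by rewrite mulmxDl; split=> [->|/eqP]; [rewrite addNr | rewrite addr_eq0 => /eqP].
by rewrite /in_LambdaM !eq_opp pm (in_supp_theta_pm thn Xs).
Qed.

Lemma split_pair_not_cospectral (a b c d : T) : isV a = isV b -> isV c != isV d ->
  ~ strongly_cospectral LQ (pair a b) (pair c d).
Proof.
move=> abV cdV SC; pose one : 'rV[R]_#|V| := const_mx 1.
have oneLG : one *m LG = 0 *: one.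
  apply/rowP => i; rewrite -(enum_valK i) (lapG_row adj_sym adj_irr regular) !mxE.
  under eq_bigr do rewrite mxE mulr1.
  by rewrite -deg_sum regular mulr1 subrr mul0r.
have f0 : qpoly r (0 : R) (r%:R + 2) = 0 by rewrite /qpoly; ring.
have qval_one (u : T) : qval (2 + 0 - (r%:R + 2)) one u = if isV u then - r%:R else 2.
  case: u => [v|f] /=; first by rewrite mxE; ring.
  by have [p [q [_ pq ->]]] := edge_ends adj_irr f; rewrite edge_sum2 // !mxE.
have := strongly_cospectral_dot_sqr SC (qlift_eigen adj_sym adj_irr regular oneLG f0).
rewrite !dot_evecB !qliftE !qval_one abV subrr expr0n /=.
move: cdV; case: (isV c); case: (isV d) => //= _ /esym/eqP; rewrite sqrf_eq0 => /eqP.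
  by have := ler0n R r; lra.
by have := ler0n R r; lra.
Qed.

Lemma vertex_edge_cospectral_eq (p q : V) (g h : E) mu (w : 'rV[R]_#|V|) :
  strongly_cospectral LQ (pair (inl p) (inl q)) (pair (inr g) (inr h)) ->
  mu != r%:R - 2 -> w *m LG = mu *: w -> w 0 (rk p) = w 0 (rk q).
Proof.
move=> SC mun wLG.
have sq l : qpoly r mu l = 0 -> ((2 + mu - l) * (w 0 (rk p) - w 0 (rk q))) ^+ 2 =
    (edge_sum w (val g) - edge_sum w (val h)) ^+ 2.
  move=> f0; have wQ := qlift_eigen adj_sym adj_irr regular wLG f0.
  by have := strongly_cospectral_dot_sqr SC wQ; rewrite !dot_evecB !qliftE /= mulrBr.
have := sq _ (qpoly_theta_p r mu); rewrite -(sq _ (qpoly_theta_m r mu)) !exprMn => /eqP.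
rewrite -subr_eq0 -mulrBl subr_sqr !mulf_eq0 orbb.
case/orP => [/orP [] /eqP|/eqP/subr0_eq //].
  move=> alphaB0; move: (theta_p_neq_m r mu).
  by rewrite (_ : theta_p r mu = theta_m r mu) ?eqxx //; lra.
by move=> alphaD0; move/eqP: mun; case; have := theta_pD r mu; lra.
Qed.

Lemma vertex_edge_not_cospectral (p q : V) (g h : E) : p != q ->
  ~ strongly_cospectral LQ (pair (inl p) (inl q)) (pair (inr g) (inr h)).
Proof.
move=> pq SC; have sLG : pair p q *m LG = (r%:R - 2) *: pair p q.
  apply: (eigen_of_orth_other_eigenvectors (lap_tr _ adj_sym)) => mu w mun wLG.
  by rewrite dot_evecB (vertex_edge_cospectral_eq SC mun wLG) subrr.
move/rowP/(_ (rk p)): sLG; rewrite mulmxBl /evec -!rowE !mxE.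
rewrite !eqxx !(inj_eq enum_rank_inj) eq_sym (negPf pq) !enum_rankK regular /=.
by have := ler0n R (adj q p); lra.
Qed.

Lemma cospectral_pairs_same_side (a b c d : T) :
  a != b -> c != d -> isV a = isV b ->
  strongly_cospectral LQ (pair a b) (pair c d) -> isV c = isV d /\ isV a = isV c.
Proof.
move=> ab cd abV SC.
have cdV : isV c = isV d.
  by apply/eqP; apply: contraT => cdV; case: (split_pair_not_cospectral abV cdV SC).
split=> //; apply/eqP; apply: contraT => acV; exfalso; move: ab cd abV cdV acV SC.
case: a => [p|g]; case: b => [q|h] //; case: c => [p'|g']; case: d => [q'|h'] //= pq.
  by move=> _ _ _ _ /(vertex_edge_not_cospectral pq).
by move=> p'q' _ _ _ /strongly_cospectral_sym /(vertex_edge_not_cospectral p'q').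
Qed.

End QCospectral.

Theorem theorem3p1 (R : rcfType) (V : finType) (adj : rel V) (r : nat)
    (adj_sym : symmetric adj) (adj_irr : irreflexive adj)
    (regular : forall x : V, deg adj x = r) (r_ge2 : (2 <= r)%N)
    (a b : QV adj) (a_neq_b : a != b)
    (same_side : (isV a && isV b) || (~~ isV a && ~~ isV b))
    (theta : R) (theta_eig : eigenvalue (lap R adj) theta)
    (theta_neq : theta != 2 * r%:R) :
  let LQ := lap R (@qadj V adj) in
  let x := evec R a - evec R b in
  (in_supp LQ x (theta_p r theta) <-> in_supp LQ x (theta_m r theta)) /\
  (forall c d : QV adj, c != d ->
     strongly_cospectral LQ x (evec R c - evec R d) ->
     (in_LambdaP LQ x (evec R c - evec R d) (theta_p r theta) <->
      in_LambdaP LQ x (evec R c - evec R d) (theta_m r theta)) /\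
     (in_LambdaM LQ x (evec R c - evec R d) (theta_p r theta) <->
      in_LambdaM LQ x (evec R c - evec R d) (theta_m r theta))).
Proof.
move=> LQ X.
have abV : isV a = isV b by move: same_side; case: (isV a); case: (isV b).
have Xs : one_sided (isV a) X by apply: one_sided_pair; rewrite ?abV.
split=> [|c d cd SC]; first exact: in_supp_theta_pm theta_neq Xs.
have [cdV acV] := cospectral_pairs_same_side adj_sym adj_irr regular a_neq_b cd abV SC.
have Ys : one_sided (isV a) (evec R c - evec R d).
  by apply: one_sided_pair; rewrite -?cdV acV.
by split; [apply: in_LambdaP_theta_pm Ys | apply: in_LambdaM_theta_pm Ys].
Qed.
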